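(* Fix $\vartheta_1\in(0,\pi/2)$ and $\varphi_1\in[0,\pi]$. If $\eta<\eta'$ are two points of $I=\bigcup_{k\ge0}I_k$ with $\Phi(\eta)=\Phi(\eta')=\varphi_1$, then $S(\eta)<S(\eta')$, where $S(\eta)=\sin\vartheta_1\,\eta/|\sin\eta|$.
   Context: For integers $k\ge0$ let $I_k=[\vartheta_1+k\pi,(k+1)\pi-\vartheta_1]$. For $\eta\in I_k$ set $\gamma(\eta)=\sqrt{1-\sin^2\vartheta_1/\sin^2\eta}$ and $$\Phi(\eta)=-\eta\,\gamma(\eta)+k\pi+\arccos\Big(\frac{\cos(\eta-k\pi)}{\cos\vartheta_1}\Big),\qquad\arccos\in[0,\pi].$$ (In the paper the solutions of $\Phi(\eta)=\varphi_1$ parametrize CR-geodesics from $(1,0,\dots,0)$ to points with $z_1=\cos\vartheta_1e^{i\varphi_1}$, and $S(\eta)$ is the corresponding geodesic length.) *)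

From Stdlib Require Import Reals Lra.
Open Scope R_scope.

Definition in_Ik (th1 : R) (k : nat) (eta : R) : Prop :=
  th1 + INR k * PI <= eta <= INR (S k) * PI - th1.

Definition gamma (th1 eta : R) : R :=
  sqrt (1 - (sin th1)^2 / (sin eta)^2).

Definition Phi (th1 : R) (k : nat) (eta : R) : R :=
  - eta * gamma th1 eta + INR k * PI + acos (cos (eta - INR k * PI) / cos th1).

Definition Sl (th1 eta : R) : R := sin th1 * eta / Rabs (sin eta).

(* Parametrise the branch [I_k] by [p] in [[0, PI]] through
   [cos (eta - k PI) = cos th1 * cos p].  Then [dPhi/dp] and [dS/dp] are positive
   multiples of a function [h] increasing in [p]: along a branch [Phi] first
   decreases and then increases, and [S] increases from the zero of [h] on.
   Two solutions on one branch are compared through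
   [eta ^ 2 - (k PI + p - phi1) ^ 2], which equals [S ^ 2] at solutions and grows
   between them since [Phi < phi1] there.  Against a later branch, a solution
   with [h >= 0] loses because [eta] grows while [Phi = eta (1 - gamma) + (p - tau)]
   with [p - tau] nondecreasing; a solution with [h < 0] is first moved along the
   level set of [Phi] to one with [h >= 0], which only increases [S]. *)

From Stdlib Require Import Reals Lra Psatz Arith Lia.
From Coquelicot Require Import Coquelicot.
Open Scope R_scope.

Lemma is_derive_MVT (f f' : R -> R) a b :
  a < b -> (forall x, is_derive f x (f' x)) ->
  exists c, a < c < b /\ f b - f a = f' c * (b - a).
Proof.
  intros Hab Hf.
  destruct (MVT_cor2 f f' a b Hab) as [c [Hc Hac]].
  - intros c _; apply is_derive_Reals, Hf.
  - now exists c.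
Qed.

Lemma is_derive_lt (f f' : R -> R) a b :
  (forall x, is_derive f x (f' x)) -> (forall c, a < c < b -> 0 < f' c) ->
  a < b -> f a < f b.
Proof.
  intros Hf Hpos Hab.
  destruct (is_derive_MVT f f' a b Hab Hf) as [c [Hc E]].
  specialize (Hpos c Hc). nra.
Qed.

Lemma is_derive_le (f f' : R -> R) a b :
  (forall x, is_derive f x (f' x)) -> (forall c, a < c < b -> 0 <= f' c) ->
  a <= b -> f a <= f b.
Proof.
  intros Hf Hpos [Hab | <-]; [|lra].
  destruct (is_derive_MVT f f' a b Hab Hf) as [c [Hc E]].
  specialize (Hpos c Hc). nra.
Qed.

Lemma is_derive_continuity (f f' : R -> R) :
  (forall x, is_derive f x (f' x)) -> continuity f.
Proof.
  intros Hf x. apply derivable_continuous_pt.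
  exists (f' x). apply is_derive_Reals, Hf.
Qed.

Lemma sq_mul_one_sub_sq_lt (e e' g g' : R) :
  0 < e -> e < e' -> 0 <= g < 1 -> 0 <= g' < 1 -> e' * g' - e * g <= e' - e ->
  e ^ 2 * (1 - g ^ 2) < e' ^ 2 * (1 - g' ^ 2).
Proof.
  intros He He' Hg Hg' Hd.
  assert (0 <= e' * g' + e * g < e' + e) by nra.
  assert ((e' * g' - e * g) * (e' * g' + e * g) < (e' - e) * (e' + e)) by nra.
  nra.
Qed.

Lemma sin_plus_INR_PI_sq t k : sin (t + INR k * PI) ^ 2 = sin t ^ 2.
Proof.
  induction k as [|k IH].
  - now rewrite Rmult_0_l, Rplus_0_r.
  - rewrite S_INR, <- IH.
    replace (t + (INR k + 1) * PI) with (t + INR k * PI + PI) by ring.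
    rewrite neg_sin. ring.
Qed.

(* In the parameter [p], [eta = k PI + tau p] and [gamma], [Phi], [S] become
   [gam], [phi_of], [len_of]; [hsgn] is the function [h]. *)
Definition tau (th p : R) : R := acos (cos th * cos p).
Definition eta_of (th : R) (k : nat) (p : R) : R := INR k * PI + tau th p.
Definition gam (th p : R) : R := cos th * sin p / sin (tau th p).
Definition phi_of (th : R) (k : nat) (p : R) : R :=
  INR k * PI + p - eta_of th k p * gam th p.
Definition len_of (th : R) (k : nat) (p : R) : R :=
  sin th * eta_of th k p / sin (tau th p).
Definition hsgn (th : R) (k : nat) (p : R) : R :=
  sin (tau th p) - eta_of th k p * (cos th * cos p).

Section Parametrization.
Variable th : R.
Hypothesis Hth : 0 < th < PI / 2.

Let sin_th_pos : 0 < sin th.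
Proof. apply sin_gt_0; lra. Qed.

Let cos_th_pos : 0 < cos th.
Proof. apply cos_gt_0; lra. Qed.

Let sin2_cos2_th : sin th ^ 2 + cos th ^ 2 = 1.
Proof. pose proof (sin2_cos2 th). unfold Rsqr in *. lra. Qed.

Lemma cos_tau p : cos (tau th p) = cos th * cos p.
Proof. apply cos_acos. pose proof (COS_bound p). split; nra. Qed.

Lemma tau_bounds p : th <= tau th p <= PI - th.
Proof.
  pose proof (acos_bound (cos th * cos p)) as Hb. fold (tau th p) in Hb.
  pose proof (cos_tau p). pose proof (COS_bound p).
  split.
  - destruct (Rle_lt_dec th (tau th p)) as [|Hl]; auto.
    pose proof (cos_decreasing_1 (tau th p) th ltac:(lra) ltac:(lra)
      ltac:(lra) ltac:(lra) Hl). nra.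
  - destruct (Rle_lt_dec (tau th p) (PI - th)) as [|Hl]; auto.
    pose proof (cos_decreasing_1 (PI - th) (tau th p) ltac:(lra) ltac:(lra)
      ltac:(lra) ltac:(lra) Hl) as Hq.
    rewrite Rtrigo_facts.cos_pi_minus in Hq. nra.
Qed.

Lemma sin_tau_sq p : sin (tau th p) ^ 2 = 1 - (cos th * cos p) ^ 2.
Proof.
  pose proof (sin2_cos2 (tau th p)) as E. rewrite cos_tau in E. unfold Rsqr in E. nra.
Qed.

Lemma sin_th_le_sin_tau p : sin th <= sin (tau th p).
Proof.
  pose proof (tau_bounds p).
  assert (0 <= sin (tau th p)) by (apply sin_ge_0; lra).
  pose proof (sin_tau_sq p). pose proof (COS_bound p).
  assert (cos p ^ 2 <= 1) by nra. nra.
Qed.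

Lemma sin_tau_pos p : 0 < sin (tau th p).
Proof. pose proof (sin_th_le_sin_tau p). lra. Qed.

Lemma sin_tau_neq_0 p : sin (tau th p) <> 0.
Proof. pose proof (sin_tau_pos p). lra. Qed.

Lemma gam_lt_1 p : gam th p < 1.
Proof.
  pose proof (sin_tau_pos p). pose proof (sin_tau_sq p). pose proof (sin2_cos2 p).
  unfold Rsqr in *. unfold gam.
  apply Rmult_lt_reg_r with (sin (tau th p)); [lra|].
  field_simplify; [|lra].
  destruct (Rle_lt_dec (cos th * sin p) 0); [lra|].
  apply Rsqr_incrst_0; unfold Rsqr; nra.
Qed.

Lemma gam_ge_0 p : 0 <= p <= PI -> 0 <= gam th p.
Proof.
  intros Hp. pose proof (sin_tau_pos p). pose proof (sin_ge_0 p ltac:(lra) ltac:(lra)).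
  unfold gam. apply Rmult_le_pos; [nra|]. left; apply Rinv_0_lt_compat; lra.
Qed.

Lemma gam_sq p : gam th p ^ 2 = 1 - sin th ^ 2 / sin (tau th p) ^ 2.
Proof.
  pose proof (sin_tau_pos p). pose proof (sin_tau_sq p) as Hs2. pose proof (sin2_cos2 p).
  unfold Rsqr in *. unfold gam.
  replace ((cos th * sin p / sin (tau th p)) ^ 2)
    with (cos th ^ 2 * sin p ^ 2 / sin (tau th p) ^ 2) by (field; lra).
  replace (sin p ^ 2) with (1 - cos p ^ 2) by lra.
  replace (sin th ^ 2) with (1 - cos th ^ 2) by lra.
  rewrite Hs2. field. nra.
Qed.

Lemma is_derive_tau p : is_derive (tau th) p (gam th p).
Proof.
  apply is_derive_Reals.
  assert (Hu : -1 < cos th * cos p < 1) by (pose proof (COS_bound p); split; nra).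
  assert (Hs : sin (tau th p) = sqrt (1 - (cos th * cos p)²)) by (apply sin_acos; lra).
  pose proof (sin_tau_pos p).
  replace (gam th p) with (-1 / sqrt (1 - (cos th * cos p)²) * (cos th * - sin p))
    by (unfold gam; rewrite <- Hs; field; lra).
  apply (derivable_pt_lim_comp (fun q => cos th * cos q) acos).
  - apply derivable_pt_lim_scal, derivable_pt_lim_cos.
  - apply (derive_pt_eq_1 _ _ _ (derivable_pt_acos _ Hu)), derive_pt_acos.
Qed.

Lemma ex_derive_tau p : ex_derive (tau th) p.
Proof. exists (gam th p). apply is_derive_tau. Qed.

Lemma Derive_tau p : Derive (fun q => tau th q) p = gam th p.
Proof. apply is_derive_unique, is_derive_tau. Qed.

Ltac derive_with_tau :=
  unfold hsgn, len_of, phi_of, gam, eta_of; auto_derive;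
  [repeat split; auto using ex_derive_tau, sin_tau_neq_0 |];
  rewrite Derive_tau; unfold gam.

Lemma is_derive_hsgn k p :
  is_derive (hsgn th k) p (eta_of th k p * cos th * sin p).
Proof.
  derive_with_tau. pose proof (sin_tau_pos p).
  rewrite cos_tau. unfold eta_of. field. lra.
Qed.

Lemma is_derive_len_of k p :
  is_derive (len_of th k) p
    (sin th * cos th * sin p / sin (tau th p) ^ 3 * hsgn th k p).
Proof.
  derive_with_tau. pose proof (sin_tau_pos p).
  rewrite cos_tau. unfold hsgn, eta_of. field. lra.
Qed.

Lemma is_derive_phi_of k p :
  is_derive (phi_of th k) p (sin th ^ 2 / sin (tau th p) ^ 3 * hsgn th k p).
Proof.
  derive_with_tau. pose proof (sin_tau_pos p). pose proof (sin_tau_sq p) as Hs2.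
  pose proof (sin2_cos2 p). unfold Rsqr in *.
  rewrite cos_tau. unfold hsgn, eta_of.
  replace (sin th ^ 2) with (1 - cos th ^ 2) by lra.
  field_simplify; [|lra..].
  unfold Rdiv; f_equal.
  replace (sin p ^ 2) with (1 - cos p ^ 2) by lra.
  replace (sin (tau th p) ^ 3) with (sin (tau th p) * sin (tau th p) ^ 2) by ring.
  rewrite Hs2. ring.
Qed.

Lemma eta_of_ge k p : th <= eta_of th k p.
Proof.
  unfold eta_of. pose proof (tau_bounds p). pose proof (pos_INR k).
  pose proof PI_RGT_0. nra.
Qed.

Lemma eta_of_lt k k' p p' : (k < k')%nat -> eta_of th k p < eta_of th k' p'.
Proof.
  intros Hk. unfold eta_of. pose proof (tau_bounds p). pose proof (tau_bounds p').
  assert (INR k + 1 <= INR k') by (rewrite <- S_INR; apply le_INR; lia).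
  pose proof PI_RGT_0. nra.
Qed.

Lemma tau_le p1 p2 : 0 <= p1 -> p1 <= p2 -> p2 <= PI -> tau th p1 <= tau th p2.
Proof.
  intros H1 H12 H2. apply (is_derive_le _ _ _ _ is_derive_tau); auto.
  intros c Hc. apply gam_ge_0. lra.
Qed.

Lemma tau_sub_le p1 p2 : p1 <= p2 -> tau th p2 - tau th p1 <= p2 - p1.
Proof.
  intros H12.
  enough (p1 - tau th p1 <= p2 - tau th p2) by lra.
  apply (is_derive_le (fun q => q - tau th q) (fun q => 1 - gam th q)); auto.
  - intros q. auto_derive; [apply ex_derive_tau|]. rewrite Derive_tau. ring.
  - intros c _. pose proof (gam_lt_1 c). lra.
Qed.

Lemma hsgn_lt k p1 p2 :
  0 <= p1 -> p1 < p2 -> p2 <= PI -> hsgn th k p1 < hsgn th k p2.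
Proof.
  intros H1 H12 H2. apply (is_derive_lt _ _ _ _ (is_derive_hsgn k)); auto.
  intros c Hc. pose proof (eta_of_ge k c).
  assert (0 < sin c) by (apply sin_gt_0; lra).
  apply Rmult_lt_0_compat; [apply Rmult_lt_0_compat|]; lra.
Qed.

Lemma len_of_lt k p1 p2 : 0 <= p1 -> p1 < p2 -> p2 <= PI -> 0 <= hsgn th k p1 ->
  len_of th k p1 < len_of th k p2.
Proof.
  intros H1 H12 H2 Hh. apply (is_derive_lt _ _ _ _ (is_derive_len_of k)); auto.
  intros c Hc. pose proof (hsgn_lt k p1 c ltac:(lra) ltac:(lra) ltac:(lra)).
  assert (0 < sin c) by (apply sin_gt_0; lra).
  pose proof (sin_tau_pos c).
  apply Rmult_lt_0_compat; [|lra].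
  apply Rdiv_lt_0_compat; [|apply pow_lt; lra].
  apply Rmult_lt_0_compat; [apply Rmult_lt_0_compat|]; lra.
Qed.

Lemma len_of_le k p1 p2 : 0 <= p1 -> p1 <= p2 -> p2 <= PI -> 0 <= hsgn th k p1 ->
  len_of th k p1 <= len_of th k p2.
Proof.
  intros H1 [H12 | <-] H2 Hh; [left; apply len_of_lt|]; lra.
Qed.

Lemma phi_of_lt k p1 p2 : 0 <= p1 -> p1 < p2 -> p2 <= PI -> 0 <= hsgn th k p1 ->
  phi_of th k p1 < phi_of th k p2.
Proof.
  intros H1 H12 H2 Hh. apply (is_derive_lt _ _ _ _ (is_derive_phi_of k)); auto.
  intros c Hc. pose proof (hsgn_lt k p1 c ltac:(lra) ltac:(lra) ltac:(lra)).
  pose proof (sin_tau_pos c).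
  apply Rmult_lt_0_compat; [|lra].
  apply Rdiv_lt_0_compat; apply pow_lt; lra.
Qed.

Lemma phi_of_gt k p1 p2 : 0 <= p1 -> p1 < p2 -> p2 <= PI -> hsgn th k p2 <= 0 ->
  phi_of th k p2 < phi_of th k p1.
Proof.
  intros H1 H12 H2 Hh.
  destruct (is_derive_MVT _ _ _ _ H12 (is_derive_phi_of k)) as [c [Hc E]].
  pose proof (hsgn_lt k c p2 ltac:(lra) ltac:(lra) ltac:(lra)).
  pose proof (sin_tau_pos c).
  assert (0 < sin th ^ 2 / sin (tau th c) ^ 3)
    by (apply Rdiv_lt_0_compat; apply pow_lt; lra).
  assert (sin th ^ 2 / sin (tau th c) ^ 3 * hsgn th k c < 0) by nra.
  nra.
Qed.

Lemma len_of_pos k p : 0 < len_of th k p.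
Proof.
  pose proof (sin_tau_pos p). pose proof (eta_of_ge k p).
  unfold len_of. apply Rdiv_lt_0_compat; nra.
Qed.

Lemma len_of_sq k p : len_of th k p ^ 2 = eta_of th k p ^ 2 * (1 - gam th p ^ 2).
Proof.
  pose proof (sin_tau_pos p). rewrite gam_sq. unfold len_of. field. lra.
Qed.

Definition level (k : nat) (f p : R) : R :=
  eta_of th k p ^ 2 - (INR k * PI + p - f) ^ 2.

Lemma is_derive_level k f p : is_derive (level k f) p (2 * (f - phi_of th k p)).
Proof.
  unfold level, phi_of, eta_of. auto_derive; [apply ex_derive_tau|].
  rewrite Derive_tau. ring.
Qed.

Lemma level_phi_of k p : level k (phi_of th k p) p = len_of th k p ^ 2.
Proof. rewrite len_of_sq. unfold level, phi_of. ring. Qed.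

Lemma phi_of_lt_between k p1 c p2 :
  0 <= p1 -> p1 < c < p2 -> p2 <= PI -> phi_of th k p1 = phi_of th k p2 ->
  phi_of th k c < phi_of th k p1.
Proof.
  intros H1 Hc H2 HP.
  destruct (Rle_lt_dec (hsgn th k c) 0) as [Hh | Hh].
  - apply phi_of_gt; lra.
  - rewrite HP. apply phi_of_lt; lra.
Qed.

Lemma len_of_lt_same_branch k p1 p2 :
  0 <= p1 -> p1 < p2 -> p2 <= PI -> phi_of th k p1 = phi_of th k p2 ->
  len_of th k p1 < len_of th k p2.
Proof.
  intros H1 H12 H2 HP.
  set (f := phi_of th k p1).
  assert (Hlevel : level k f p1 < level k f p2).
  { apply (is_derive_lt _ _ _ _ (is_derive_level k f)); auto.
    intros c Hc. pose proof (phi_of_lt_between k p1 c p2 H1 Hc H2 HP). unfold f. lra. }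
  unfold f in Hlevel. rewrite level_phi_of, HP, level_phi_of in Hlevel.
  pose proof (len_of_pos k p1). pose proof (len_of_pos k p2). nra.
Qed.

Lemma len_of_lt_later_branch_of_hsgn_nonneg k k' p p' :
  (k < k')%nat -> 0 <= p <= PI -> 0 <= p' <= PI -> 0 <= hsgn th k p ->
  phi_of th k p = phi_of th k' p' -> len_of th k p < len_of th k' p'.
Proof.
  intros Hk Hp Hp' Hh HP.
  destruct (Rle_lt_dec p' p) as [Hpp | Hpp].
  - pose proof (tau_sub_le p' p Hpp).
    assert (eta_of th k' p' * gam th p' - eta_of th k p * gam th p
              <= eta_of th k' p' - eta_of th k p)
      by (unfold phi_of, eta_of in *; lra).
    enough (len_of th k p ^ 2 < len_of th k' p' ^ 2)
      by (pose proof (len_of_pos k p); pose proof (len_of_pos k' p'); nra).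
    rewrite !len_of_sq. apply sq_mul_one_sub_sq_lt; auto using eta_of_lt.
    + pose proof (eta_of_ge k p). lra.
    + split; auto using gam_ge_0, gam_lt_1.
    + split; auto using gam_ge_0, gam_lt_1.
  - apply Rle_lt_trans with (len_of th k p'); [apply len_of_le; lra|].
    pose proof (eta_of_lt k k' p' p' Hk). pose proof (sin_tau_pos p').
    unfold len_of. apply Rmult_lt_compat_r; [apply Rinv_0_lt_compat; lra|].
    apply Rmult_lt_compat_l; lra.
Qed.

Lemma phi_of_PI k : phi_of th k PI = INR k * PI + PI.
Proof. unfold phi_of, gam. rewrite sin_PI. unfold Rdiv. ring. Qed.

Lemma hsgn_PI_pos k : 0 < hsgn th k PI.
Proof.
  unfold hsgn. rewrite cos_PI.
  pose proof (sin_tau_pos PI). pose proof (eta_of_ge k PI). nra.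
Qed.

(* Past the zero of [hsgn], [phi_of] climbs back to [k PI + PI]. *)
Lemma phi_of_return k p :
  0 <= p <= PI -> hsgn th k p < 0 -> phi_of th k p <= INR k * PI + PI ->
  exists q, p < q <= PI /\ phi_of th k q = phi_of th k p /\ 0 <= hsgn th k q.
Proof.
  intros Hp Hh Hle.
  pose proof (hsgn_PI_pos k).
  destruct (IVT_cor (hsgn th k) p PI
              (is_derive_continuity _ _ (is_derive_hsgn k)) ltac:(lra) ltac:(nra))
    as [z [Hz Hz0]].
  assert (p < z) by (destruct (Req_dec p z); subst; lra).
  pose proof (phi_of_gt k p z ltac:(lra) ltac:(lra) ltac:(lra) ltac:(lra)).
  set (G := fun q => phi_of th k q - phi_of th k p).
  assert (HG : continuity G).
  { apply continuity_minus; [exact (is_derive_continuity _ _ (is_derive_phi_of k))|].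
    apply continuity_const. now intros ? ?. }
  destruct (IVT_cor G z PI HG ltac:(lra)) as [q [Hq Hq0]].
  { unfold G. rewrite phi_of_PI. nra. }
  exists q. unfold G in Hq0. repeat split; try lra.
  rewrite <- Hz0. destruct (Req_dec z q) as [<- | Hzq]; [lra|].
  left. apply hsgn_lt; lra.
Qed.

Lemma len_of_lt_later_branch k k' p p' :
  (k < k')%nat -> 0 <= p <= PI -> 0 <= p' <= PI ->
  phi_of th k p = phi_of th k' p' -> phi_of th k p <= INR k * PI + PI ->
  len_of th k p < len_of th k' p'.
Proof.
  intros Hk Hp Hp' HP Hle.
  destruct (Rle_lt_dec 0 (hsgn th k p)) as [Hh | Hh].
  - now apply len_of_lt_later_branch_of_hsgn_nonneg.
  - destruct (phi_of_return k p Hp Hh Hle) as [q [Hq [HPq Hhq]]].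
    apply Rlt_trans with (len_of th k q).
    + apply len_of_lt_same_branch; auto; lra.
    + apply len_of_lt_later_branch_of_hsgn_nonneg; auto; lra.
Qed.

Lemma tau_acos_div t : th <= t <= PI - th -> tau th (acos (cos t / cos th)) = t.
Proof.
  intros Ht.
  assert (Hct : - cos th <= cos t <= cos th).
  { split.
    - rewrite <- Rtrigo_facts.cos_pi_minus.
      destruct (Req_dec t (PI - th)) as [-> | E]; [lra|].
      left. apply cos_decreasing_1; lra.
    - destruct (Req_dec t th) as [-> | E]; [lra|].
      left. apply cos_decreasing_1; lra. }
  unfold tau. rewrite cos_acos.
  - replace (cos th * (cos t / cos th)) with (cos t) by (field; lra).
    apply acos_cos. lra.
  - split; [apply Rmult_le_reg_r with (cos th)|apply Rmult_le_reg_r with (cos th)];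
      auto; field_simplify; lra.
Qed.

Lemma param_of_in_Ik k eta : in_Ik th k eta ->
  exists p, 0 <= p <= PI /\ eta = eta_of th k p /\
            Phi th k eta = phi_of th k p /\ Sl th eta = len_of th k p.
Proof.
  intros HI. unfold in_Ik in HI. rewrite S_INR in HI.
  set (p := acos (cos (eta - INR k * PI) / cos th)).
  assert (Htau : tau th p = eta - INR k * PI) by (apply tau_acos_div; lra).
  assert (Heta : eta = eta_of th k p) by (unfold eta_of; lra).
  assert (Hsin : sin eta ^ 2 = sin (tau th p) ^ 2).
  { rewrite Htau. replace eta with (eta - INR k * PI + INR k * PI) at 1 by ring.
    apply sin_plus_INR_PI_sq. }
  pose proof (sin_tau_pos p).
  exists p. split; [apply acos_bound|]. split; [exact Heta|]. split.
  - assert (Hg : gamma th eta = gam th p).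
    { unfold gamma. rewrite Hsin, <- gam_sq. apply sqrt_pow2, gam_ge_0, acos_bound. }
    unfold Phi, phi_of. rewrite Hg, <- Heta. fold p. ring.
  - unfold Sl, len_of. rewrite <- Heta. f_equal.
    rewrite <- (Rabs_pos_eq (sin (tau th p))) by lra.
    apply Rsqr_eq_abs_0. unfold Rsqr. nra.
Qed.

End Parametrization.

Theorem proposition5p76 (th1 phi1 eta eta' : R) (k k' : nat) :
  0 < th1 < PI / 2 ->
  0 <= phi1 <= PI ->
  in_Ik th1 k eta ->
  in_Ik th1 k' eta' ->
  eta < eta' ->
  Phi th1 k eta = phi1 ->
  Phi th1 k' eta' = phi1 ->
  Sl th1 eta < Sl th1 eta'.
Proof.
  intros Hth [_ Hphi1] HI HI' Hlt HP HP'.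
  destruct (param_of_in_Ik th1 Hth k eta HI) as (p & Hp & -> & HPhi & ->).
  destruct (param_of_in_Ik th1 Hth k' eta' HI') as (p' & Hp' & -> & HPhi' & ->).
  rewrite HPhi in HP. rewrite HPhi' in HP'.
  destruct (lt_eq_lt_dec k k') as [[Hk | <-] | Hk].
  - apply len_of_lt_later_branch; auto; try lra.
    pose proof (pos_INR k). pose proof PI_RGT_0. nra.
  - apply len_of_lt_same_branch; try lra.
    destruct (Rle_lt_dec p' p) as [Hle | Hgt]; [|lra].
    pose proof (tau_le th1 Hth p' p ltac:(lra) Hle ltac:(lra)).
    unfold eta_of in Hlt. lra.
  - pose proof (eta_of_lt th1 Hth k' k p' p Hk). lra.
Qed.
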